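(* Let $r\ge 3$ and $k\ge 2$ be integers. There exist $r$-sets $(e_i)_{i=0}^{T_1}$, all containing $v_1^r$, and an $r$-graph $H_1$ with vertex set $A_{r-1}^*\cup\{v_1^r\}$ that is $(e_i)_{i=0}^{T_1}$-sequential, where $T_1=(2k-1)^{r-3}(8k^2-12k+6)-2$.
   Context: Fix a positive integer $k$. For every integer $i\ge1$ let $A_i=\{v_1^i,v_2^i,\dots,v_{4k-3}^i\}$ (pairwise disjoint sets) and $A_i^*=\bigcup_{j=1}^iA_j$. An $r$-graph is an $r$-uniform hypergraph identified with its edge set; $F_r=K^r_{r+1}$. For an $r$-graph $G_0$ on vertex set $V$, the $F_r$-bootstrap process in the complete $r$-graph on $V$ is: $G_i=G_{i-1}\cup\{e : e\notin G_{i-1} \text{ an } r\text{-subset of } V,\ \exists\, w\in V\setminus e \text{ with every other } r\text{-subset of } e\cup\{w\} \text{ in } G_{i-1}\}$; the $r$-sets in $G_i\setminus G_{i-1}$ are infected at step $i$; $G_0$ is stationary if $G_1=G_0$. Definition (sequential): Let $r\ge3$, $H$ an $r$-graph with vertex set $V(H)\subseteq A_r^*$, and $(e_i)_{i=0}^T$ a sequence of $r$-subsets of $V(H)$ with $e_0\in H$. Then $H$ is $(e_i)_{i=0}^T$-sequential if, for the $F_r$-bootstrap process in the complete $r$-graph on $V(H)$: (i) starting from $H$, the process runs for $T$ steps (becomes stationary after step $T$), infecting only $e_i$ at step $i$ for each $i\in[1,T]$; (ii) $H\setminus\{e_0\}$ is stationary; (iii) starting from $(H\cup\{e_T\})\setminus\{e_0\}$,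 the process infects only $e_{T-i}$ at step $i$ for each $i\in[1,T]$. *)

From mathcomp Require Import all_boot.
Set Implicit Arguments. Unset Strict Implicit. Unset Printing Implicit Defensive.

(* Ambient vertex type: the pair (i, j) stands for v_j^i, for 1 <= i <= r and
   1 <= j <= 4k-3 (coordinate 0 is unused). *)
Definition vtx (r k : nat) : finType := ('I_r.+1 * 'I_(4 * k - 3).+1)%type.

Definition vv (r k i j : nat) : vtx r k := (inord i, inord j).

Definition Astar (r k i : nat) : {set vtx r k} :=
  [set x : vtx r k | (1 <= nat_of_ord x.1 <= i) && (1 <= nat_of_ord x.2 <= 4 * k - 3)].

Section Bootstrap.
Variable T : finType.

Definition rsubset (r : nat) (W e : {set T}) : bool := (e \subset W) && (#|e| == r).

Definition bstep (r : nat) (W : {set T}) (G : {set {set T}}) : {set {set T}} :=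
  G :|: [set e | [&& rsubset r W e, e \notin G &
     [exists w in W :\: e,
        [forall f : {set T},
           [&& f \subset e :|: [set w], #|f| == r & f != e] ==> (f \in G)]]]].

Definition bproc (r : nat) (W : {set T}) (G0 : {set {set T}}) (n : nat) :=
  iter n (bstep r W) G0.

Definition stationary (r : nat) (W : {set T}) (G : {set {set T}}) : Prop :=
  bstep r W G = G.

Definition sequential (r : nat) (W : {set T}) (H : {set {set T}})
    (e : nat -> {set T}) (Tn : nat) : Prop :=
  [/\ (forall i, i <= Tn -> rsubset r W (e i)),
      e 0 \in H,
      (forall i, 1 <= i <= Tn ->
         bproc r W H i :\: bproc r W H i.-1 = [set e i])
      /\ stationary r W (bproc r W H Tn),
      stationary r W (H :\ e 0) &
      (forall i, 1 <= i <= Tn ->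
         bproc r W ((H :|: [set e Tn]) :\ e 0) i
           :\: bproc r W ((H :|: [set e Tn]) :\ e 0) i.-1 = [set e (Tn - i)])].

End Bootstrap.

From mathcomp Require Import zify.
From mathcomp Require Import all_boot.
Set Implicit Arguments. Unset Strict Implicit. Unset Printing Implicit Defensive.

(* Read v^d_a (1 <= d <= r-1) as the value a of coordinate d and v_1^r as an apex. A lattice
   path p_0, ..., p_T1 in [1, 4k-3]^(r-1), consecutive points differing by one in one
   coordinate, gives r-sets e_i = {apex} + {v^d_(p_i d)}, and consecutive ones span an
   (r+1)-clique e_i + e_(i+1). Let H_1 be all r-subsets of these cliques except e_1, ..., e_T1.
   If every (r+1)-set of the ground set whose r-subsets, except possibly one, all lie in
   cliques is itself a clique, then a missing e_j is infected exactly when e_(j-1) or e_(j+1)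
   is present: the process restores e_1, ..., e_T1 one per step, nothing happens without e_0,
   and with e_T1 instead of e_0 it runs backwards.
   For a boustrophedon path ("snake") this closure property follows from two features of the
   path: when a step changes coordinate d, all higher coordinates are odd, and two steps that
   change coordinate d between the same two values agree on all lower coordinates. *)

(* [snake n i d] is coordinate d (for 1 <= d <= n) of the i-th point (for i.+1 < snake_len n)
   of a path in [1, 2K-1]^n. Block t of the (n+1)-dimensional path runs through the
   n-dimensional one at height 2t+1, backwards when t is odd, and then steps to height 2t+2;
   [snake_inner] and [snake_top] locate point o of block t. *)
Section Snake.
Variable K : nat.
Hypothesis K_gt0 : 0 < K.

Definition snake_len n := (K ^ n).*2.

Definition snake_inner B t o :=
  if o == B.-1 then (if odd t then 0 else B.-2)
  else if odd t then B.-2 - o else o.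

Definition snake_top B t o := if o == B.-1 then t.*2.+2 else t.*2.+1.

Fixpoint snake (n i d : nat) {struct n} : nat :=
  if n is n'.+1 then
    let B := snake_len n' in
    if d == n then snake_top B (i %/ B) (i %% B)
    else snake n' (snake_inner B (i %/ B) (i %% B)) d
  else 0.

Lemma snake_len_ge2 n : 2 <= snake_len n.
Proof. by rewrite /snake_len; have := expn_gt0 K n; rewrite K_gt0 /=; lia. Qed.

Lemma snake_lenS n : snake_len n.+1 = K * snake_len n.
Proof. by rewrite /snake_len expnS; lia. Qed.

Lemma block_decomp n i : exists t o, i = t * snake_len n + o /\ o < snake_len n.
Proof.
exists (i %/ snake_len n), (i %% snake_len n); split; first exact: divn_eq.
by rewrite ltn_mod; have := snake_len_ge2 n; lia.
Qed.

Lemma snake_block n t o d : o < snake_len n ->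
  snake n.+1 (t * snake_len n + o) d =
  if d == n.+1 then snake_top (snake_len n) t o else snake n (snake_inner (snake_len n) t o) d.
Proof.
move=> lt_o; have B_gt0 : 0 < snake_len n by have := snake_len_ge2 n; lia.
by rewrite /= divnMDl // modnMDl divn_small // modn_small // addn0.
Qed.

Lemma snake_inner_lt B t o : 2 <= B -> o < B -> (snake_inner B t o).+1 < B.
Proof. by rewrite /snake_inner => B_ge2 lt_oB; case: eqP; case: (odd t); lia. Qed.

Lemma snake_top_inj B t o t' o' : 2 <= B -> snake_top B t o = snake_top B t' o' ->
  t = t' /\ (o == B.-1) = (o' == B.-1).
Proof. by rewrite /snake_top => B_ge2; case: eqP; case: eqP => /=; lia. Qed.

Lemma snake_range n i d : i.+1 < snake_len n -> 0 < d <= n ->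
  0 < snake n i d <= K.*2.-1.
Proof.
elim: n i d => [|n IH] i d; first by lia.
have [t [o [-> lt_o]]] := block_decomp n i; have B_ge2 := snake_len_ge2 n.
rewrite snake_block // snake_lenS => lt_i d_range.
case: eqP => [_|d_neq]; last by apply: IH; [exact: snake_inner_lt | lia].
have lt_tK : t * snake_len n < K * snake_len n by lia.
rewrite ltn_mul2r in lt_tK; rewrite /snake_top; case: eqP => o_last; last by lia.
have : t.+1 * snake_len n < K * snake_len n by lia.
by rewrite ltn_mul2r; lia.
Qed.

Lemma snake_inj n i j : i.+1 < snake_len n -> j.+1 < snake_len n ->
  (forall d, 0 < d <= n -> snake n i d = snake n j d) -> i = j.
Proof.
elim: n i j => [|n IH] i j; first by rewrite /snake_len expn0; lia.
have B_ge2 := snake_len_ge2 n.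
have [t [o [-> lt_o]]] := block_decomp n i; have [t' [o' [-> lt_o']]] := block_decomp n j.
move=> lt_i lt_j same.
have := same n.+1; rewrite leqnn !snake_block // eqxx => /(_ isT) /snake_top_inj [] //.
move=> eq_t last_o; subst t'.
have : snake_inner (snake_len n) t o = snake_inner (snake_len n) t o'.
  apply: IH; try exact: snake_inner_lt.
  move=> d d_range; have d_neq : (d == n.+1) = false by lia.
  by have := same d; rewrite !snake_block // d_neq; apply; lia.
by move: last_o; rewrite /snake_inner; case: eqP; case: eqP; case: (odd t) => /=; lia.
Qed.

Lemma snake_step_layer n t o : o.+2 < snake_len n ->
  let i := t * snake_len n + o in
  [/\ snake n.+1 i n.+1 = t.*2.+1, snake n.+1 i.+1 n.+1 = t.*2.+1 &
  exists2 j, j.+2 < snake_len n &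
    (forall x, x != n.+1 -> snake n.+1 i x = snake n j x /\ snake n.+1 i.+1 x = snake n j.+1 x) \/
    (forall x, x != n.+1 -> snake n.+1 i x = snake n j.+1 x /\ snake n.+1 i.+1 x = snake n j x)].
Proof.
move=> lt_o i; rewrite /i -addnS.
have lower x : x != n.+1 ->
    snake n.+1 (t * snake_len n + o) x = snake n (snake_inner (snake_len n) t o) x /\
    snake n.+1 (t * snake_len n + o.+1) x = snake n (snake_inner (snake_len n) t o.+1) x.
  by move=> /negPf x_neq; rewrite !snake_block ?x_neq //; lia.
rewrite !snake_block /snake_top /snake_inner ?eqxx; try lia.
have [o_neq o1_neq] : (o == (snake_len n).-1) = false /\ (o.+1 == (snake_len n).-1) = false.
  by lia.
rewrite o_neq o1_neq; split=> //; move: lower; rewrite /snake_inner o_neq o1_neq.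
case: (odd t) => lower.
  exists ((snake_len n).-2 - o.+1); first by lia.
  by right; have -> : ((snake_len n).-2 - o.+1).+1 = (snake_len n).-2 - o by lia.
by exists o => //; left.
Qed.

Lemma snake_step_turn n t o : o < snake_len n -> (snake_len n).-2 <= o ->
  let i := t * snake_len n + o in
  let c := if odd t then 0 else (snake_len n).-2 in
  (forall x, x != n.+1 -> snake n.+1 i x = snake n c x /\ snake n.+1 i.+1 x = snake n c x) /\
  (snake n.+1 i n.+1 = t.*2.+1 /\ snake n.+1 i.+1 n.+1 = t.*2.+2 \/
   snake n.+1 i n.+1 = t.*2.+2 /\ snake n.+1 i.+1 n.+1 = t.*2.+3).
Proof.
move=> lt_o ge_o i c; have B_ge2 := snake_len_ge2 n.
have [o_eq|o_eq] : o = (snake_len n).-2 \/ o = (snake_len n).-1 by lia.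
  have -> : i.+1 = t * snake_len n + (snake_len n).-1 by rewrite /i; lia.
  have o_neq : (o == (snake_len n).-1) = false by lia.
  split=> [x /negPf x_neq|];
    rewrite !snake_block /snake_top /snake_inner ?x_neq ?o_neq ?eqxx; try lia.
  by rewrite /c; case: (odd t); rewrite o_eq ?subnn.
have -> : i.+1 = t.+1 * snake_len n + 0 by rewrite /i mulSn; lia.
have o_neq : (0 == (snake_len n).-1) = false by lia.
rewrite /i o_eq; split=> [x /negPf x_neq|];
  rewrite !snake_block /snake_top /snake_inner ?x_neq ?o_neq ?eqxx; try lia.
by rewrite /c /=; case: (odd t); rewrite //= subn0.
Qed.

Lemma snake_step_cases n i : i.+2 < snake_len n.+1 ->
  let t := i %/ snake_len n in
  let c := if odd t then 0 else (snake_len n).-2 in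
  ((forall x, x != n.+1 -> snake n.+1 i x = snake n c x /\ snake n.+1 i.+1 x = snake n c x) /\
   (snake n.+1 i n.+1 = t.*2.+1 /\ snake n.+1 i.+1 n.+1 = t.*2.+2 \/
    snake n.+1 i n.+1 = t.*2.+2 /\ snake n.+1 i.+1 n.+1 = t.*2.+3))
  \/ [/\ snake n.+1 i n.+1 = t.*2.+1, snake n.+1 i.+1 n.+1 = t.*2.+1 &
  exists2 j, j.+2 < snake_len n &
    (forall x, x != n.+1 -> snake n.+1 i x = snake n j x /\ snake n.+1 i.+1 x = snake n j.+1 x) \/
    (forall x, x != n.+1 -> snake n.+1 i x = snake n j.+1 x /\ snake n.+1 i.+1 x = snake n j x)].
Proof.
have [t [o [-> lt_o]]] := block_decomp n i => _; cbv zeta.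
have B_gt0 : 0 < snake_len n by have := snake_len_ge2 n; lia.
rewrite divnMDl // divn_small // addn0.
have [lt_o2|ge_o] := ltnP o.+2 (snake_len n); first by right; exact: snake_step_layer.
have ge_o2 : (snake_len n).-2 <= o by lia.
by left; exact: snake_step_turn.
Qed.

Lemma snake_step n i : i.+2 < snake_len n -> exists d, [/\ 0 < d <= n,
  snake n i d = (snake n i.+1 d).+1 \/ snake n i.+1 d = (snake n i d).+1 &
  forall x, x != d -> snake n i x = snake n i.+1 x].
Proof.
elim: n i => [|n IH] i lt_i; first by move: lt_i; rewrite /snake_len expn0.
have [[lower tops]|[top_i top_i1 [j lt_j lower]]] := snake_step_cases lt_i.
  by exists n.+1; split=> [||x /lower [-> ->]]; lia.
have [d [d_range d_step same]] := IH j lt_j; have d_neq : d != n.+1 by lia.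
exists d; split=> [||x x_neq]; first by lia.
  by case: lower => /(_ d d_neq) [-> ->]; lia.
have [->|x_neq'] := eqVneq x n.+1; first by rewrite top_i top_i1.
by case: lower => /(_ x x_neq') [-> ->]; rewrite same.
Qed.

Lemma snake_diff n i d : i.+2 < snake_len n -> snake n i d != snake n i.+1 d ->
  [/\ 0 < d <= n, snake n i d = (snake n i.+1 d).+1 \/ snake n i.+1 d = (snake n i d).+1 &
  forall x, x != d -> snake n i x = snake n i.+1 x].
Proof.
move=> lt_i neq; have [d' [d'_range d'_step same]] := snake_step lt_i.
by have [->|/same eq_d] := eqVneq d d'; [split | rewrite eq_d eqxx in neq].
Qed.

Lemma snake_odd_above n i d x : i.+2 < snake_len n -> snake n i d != snake n i.+1 d ->
  d < x <= n -> odd (snake n i x).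
Proof.
elim: n i d x => [|n IH] i d x lt_i neq x_range; first by lia.
have [d_range _ _] := snake_diff lt_i neq.
have [[lower _]|[top_i top_i1 [j lt_j lower]]] := snake_step_cases lt_i.
  by have [|/lower [E1 E2]] := eqVneq d n.+1; [lia | rewrite E1 E2 eqxx in neq].
have [d_top|d_neq] := eqVneq d n.+1; first by rewrite d_top top_i top_i1 eqxx in neq.
have [->|x_neq] := eqVneq x n.+1; first by rewrite top_i /= odd_double.
case: lower => /[dup] /(_ d d_neq) [E1 E2] /(_ x x_neq) [-> _]; rewrite E1 E2 in neq.
  by apply: IH neq _; lia.
rewrite eq_sym in neq; have [_ _ same] := snake_diff lt_j neq.
by rewrite -same; [apply: IH neq _ | ]; lia.
Qed.

Lemma snake_diff_lower n i d : i.+2 < snake_len n.+1 -> d != n.+1 ->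
  snake n.+1 i d != snake n.+1 i.+1 d ->
  exists j, [/\ j.+2 < snake_len n, snake n j d != snake n j.+1 d,
    minn (snake n j d) (snake n j.+1 d) = minn (snake n.+1 i d) (snake n.+1 i.+1 d) &
    forall y, y != n.+1 -> y != d -> snake n.+1 i y = snake n j y].
Proof.
move=> lt_i d_neq neq.
have [[/(_ d d_neq) [E1 E2] _]|[_ _ [j lt_j lower]]] := snake_step_cases lt_i.
  by rewrite E1 E2 eqxx in neq.
exists j; case: lower => /[dup] /(_ d d_neq) [E1 E2] lower; rewrite E1 E2 in neq *.
  by split=> // y /lower [-> _].
rewrite eq_sym in neq; have [_ _ same] := snake_diff lt_j neq.
by split=> //; [rewrite minnC | move=> y /lower [-> _] /same].
Qed.

Lemma snake_below n i j d x : i.+2 < snake_len n -> j.+2 < snake_len n ->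
  snake n i d != snake n i.+1 d -> snake n j d != snake n j.+1 d ->
  minn (snake n i d) (snake n i.+1 d) = minn (snake n j d) (snake n j.+1 d) -> x < d ->
  snake n i x = snake n j x.
Proof.
elim: n i j d x => [|n IH] i j d x lt_i lt_j neq_i neq_j eq_min lt_xd.
  by move: lt_i; rewrite /snake_len expn0.
have [d_range _ _] := snake_diff lt_i neq_i; have x_neq : x != n.+1 by lia.
have [d_top|d_neq] := eqVneq d n.+1.
  subst d.
  have [[/(_ x x_neq) [-> _] tops_i]|[E1 E2 _]] := snake_step_cases lt_i; last first.
    by rewrite E1 E2 eqxx in neq_i.
  have [[/(_ x x_neq) [-> _] tops_j]|[E1 E2 _]] := snake_step_cases lt_j; last first.
    by rewrite E1 E2 eqxx in neq_j.
  have -> : i %/ snake_len n = j %/ snake_len n.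
    by move: eq_min; case: tops_i => -[-> ->]; case: tops_j => -[-> ->]; lia.
  by [].
have [ji [lt_ji neq_ji min_ji lower_i]] := snake_diff_lower lt_i d_neq neq_i.
have [jj [lt_jj neq_jj min_jj lower_j]] := snake_diff_lower lt_j d_neq neq_j.
have x_neq_d : x != d by lia.
rewrite lower_i // lower_j //; apply: (IH ji jj d) => //.
by rewrite min_ji min_jj.
Qed.

Lemma snake_adj n i j d : i.+1 < snake_len n -> j.+1 < snake_len n -> 0 < d <= n ->
  (forall x, 0 < x <= n -> x != d -> snake n i x = snake n j x) ->
  snake n i d = (snake n j d).+1 \/ snake n j d = (snake n i d).+1 ->
  i = j.+1 \/ j = i.+1.
Proof.
elim: n i j d => [|n IH] i j d; first by lia.
have B_ge2 := snake_len_ge2 n.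
have [t [o [-> lt_o]]] := block_decomp n i; have [t' [o' [-> lt_o']]] := block_decomp n j.
rewrite snake_lenS => lt_i lt_j d_range same step.
have lower x : x != n.+1 ->
    snake n.+1 (t * snake_len n + o) x = snake n (snake_inner (snake_len n) t o) x /\
    snake n.+1 (t' * snake_len n + o') x = snake n (snake_inner (snake_len n) t' o') x.
  by move=> /negPf x_neq; rewrite !snake_block ?x_neq.
have same_lower x : 0 < x <= n -> x != d ->
    snake n (snake_inner (snake_len n) t o) x = snake n (snake_inner (snake_len n) t' o') x.
  move=> x_range x_neq; have x_top : x != n.+1 by lia.
  by have [<- <-] := lower x x_top; apply: same => //; lia.
move: step; rewrite !snake_block // !(fun_if (fun v => v.+1)).
have [d_top|d_neq] := eqVneq d n.+1.
  have : snake_inner (snake_len n) t o = snake_inner (snake_len n) t' o'.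
    by apply: snake_inj; try exact: snake_inner_lt; move=> x x_range; apply: same_lower; lia.
  rewrite /snake_top /snake_inner; case: eqP; case: eqP;
  by case: (boolP (odd t)); case: (boolP (odd t')) => /=; lia.
have top_eq : snake_top (snake_len n) t o = snake_top (snake_len n) t' o'.
  by have := same n.+1; rewrite leqnn !snake_block // eqxx; apply; lia.
have [eq_t last_o] := snake_top_inj B_ge2 top_eq; subst t' => step.
have : snake_inner (snake_len n) t o = (snake_inner (snake_len n) t o').+1 \/
       snake_inner (snake_len n) t o' = (snake_inner (snake_len n) t o).+1.
  by apply: (IH _ _ d); try exact: snake_inner_lt; [lia | apply: same_lower | ].
by move: last_o; rewrite /snake_inner; case: eqP; case: eqP; case: (odd t) => /=; lia.
Qed.

End Snake.

Section CliqueChain.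
Variables (T : finType) (r N : nat) (W : {set T}) (e : nat -> {set T}).

Definition clique s := e s :|: e s.+1.

Hypothesis N_gt0 : 0 < N.
Hypothesis e_subW : forall i, i <= N -> e i \subset W.
Hypothesis card_e : forall i, i <= N -> #|e i| = r.
Hypothesis card_clique : forall s, s < N -> #|clique s| = r.+1.
Hypothesis e_sub_clique : forall i s, i <= N -> s < N ->
  e i \subset clique s -> i = s \/ i = s.+1.
Hypothesis clique_closed : forall (f : {set T}) (w : T),
  f \subset W -> #|f| = r -> w \in W :\: f ->
  (forall x, x \in f -> exists2 s, s < N & (w |: f) :\ x \subset clique s) ->
  exists2 s, s < N & w |: f \subset clique s.

Lemma clique_subW s : s < N -> clique s \subset W.
Proof. by move=> lt_sN; rewrite subUset !e_subW // ltnW. Qed.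

Lemma e_inj i j : i <= N -> j <= N -> e i = e j -> i = j.
Proof.
wlog lt_ij : i j / i < j.
  move=> wlog_ij hi hj eq_e; case: (ltngtP i j) => [ij|ji|//].
    exact: wlog_ij ij hi hj eq_e.
  by apply/esym/(wlog_ij j i).
move=> hi hj eq_e; have lt_iN : i < N := leq_trans lt_ij hj.
have [|ji|ji] := e_sub_clique hj lt_iN; first by rewrite -eq_e subsetUl.
- by rewrite ji ltnn in lt_ij.
- by have := card_clique lt_iN; rewrite /clique -ji -eq_e setUid card_e //; lia.
Qed.

Lemma eq_e i j : i <= N -> j <= N -> (e i == e j) = (i == j).
Proof. by move=> le_iN le_jN; apply/eqP/eqP => [/(e_inj le_iN le_jN)|->]. Qed.

Definition faces : {set {set T}} :=
  [set f : {set T} | [exists s : 'I_N, (f \subset clique s) && (#|f| == r)]].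

Lemma facesP (f : {set T}) :
  reflect (exists2 s, s < N & f \subset clique s /\ #|f| = r) (f \in faces).
Proof.
rewrite inE; apply: (iffP existsP) => [[s /andP [sub /eqP card]]|[s lt_sN [sub card]]].
  by exists s.
by exists (Ordinal lt_sN); rewrite sub card eqxx.
Qed.

Lemma e_in_faces i : i <= N -> e i \in faces.
Proof.
move=> le_iN; apply/facesP; rewrite card_e //.
case: (ltnP i N) => [lt_iN|le_Ni]; first by exists i; rewrite ?subsetUl.
have i_eq : i = i.-1.+1 by lia.
by exists i.-1; [lia | rewrite {1}i_eq subsetUr].
Qed.

Lemma faces_rsubset (f : {set T}) : f \in faces -> rsubset r W f.
Proof.
case/facesP=> s lt_sN [sub card]; rewrite /rsubset card eqxx andbT.
exact: subset_trans sub (clique_subW lt_sN).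
Qed.

Definition chain_graph (P : pred nat) : {set {set T}} :=
  faces :\: [set e i | i : 'I_N.+1 & P i].

Lemma e_or_not (f : {set T}) : (exists2 i, i <= N & f = e i) \/ (forall i, i <= N -> f != e i).
Proof.
have [/existsP [i /eqP ->]|no_e] := boolP [exists i : 'I_N.+1, f == e i].
  by left; exists i; rewrite // -ltnS.
right=> i le_iN; apply: contra no_e => /eqP ->.
by apply/existsP; exists (Ordinal (le_iN : i < N.+1)).
Qed.

Lemma mem_chain_graph_e P i : i <= N -> (e i \in chain_graph P) = ~~ P i.
Proof.
move=> le_iN; rewrite in_setD e_in_faces // andbT; congr negb.
apply/imsetP/idP => [[j]|Pi]; last by exists (Ordinal (le_iN : i < N.+1)); rewrite ?inE.
by rewrite inE => Pj /e_inj ->; rewrite // -ltnS.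
Qed.

Lemma mem_chain_graph_other P (f : {set T}) : (forall i, i <= N -> f != e i) ->
  (f \in chain_graph P) = (f \in faces).
Proof.
move=> not_e; rewrite in_setD andb_idl // => _.
by apply/imsetP=> -[i _ f_ei]; move: (not_e i); rewrite -ltnS ltn_ord f_ei eqxx => /(_ isT).
Qed.

Lemma chain_graph_rsubset P (f : {set T}) : f \in chain_graph P -> rsubset r W f.
Proof. by case/setDP => /faces_rsubset. Qed.

Lemma chain_graph_ext P Q : (forall i, i <= N -> P i = Q i) ->
  chain_graph P = chain_graph Q.
Proof.
move=> PQ; apply/setP => f; have [[i le_iN ->]|not_e] := e_or_not f.
  by rewrite !mem_chain_graph_e // PQ.
by rewrite !mem_chain_graph_other.
Qed.

Lemma chain_graphD1 P i : i <= N ->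
  chain_graph P :\ e i = chain_graph [pred j | (j == i) || P j].
Proof.
move=> le_iN; apply/setP => f; have [[j le_jN ->]|not_e] := e_or_not f.
  by rewrite in_setD1 !mem_chain_graph_e // inE negb_or eq_e.
by rewrite in_setD1 !mem_chain_graph_other // not_e.
Qed.

Lemma chain_graphU1 P i : i <= N ->
  chain_graph P :|: [set e i] = chain_graph [pred j | (j != i) && P j].
Proof.
move=> le_iN; apply/setP => f; have [[j le_jN ->]|not_e] := e_or_not f.
  by rewrite in_setU in_set1 !mem_chain_graph_e // inE negb_and negbK eq_e // orbC.
by rewrite in_setU in_set1 (negPf (not_e i le_iN)) orbF !mem_chain_graph_other.
Qed.

Lemma bstep_new_clique (G : {set {set T}}) (f : {set T}) :
  G \subset faces -> f \notin G -> f \in bstep r W G ->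
  exists2 s, s < N & [/\ f \subset clique s, #|f| = r &
    forall g : {set T}, g \subset clique s -> #|g| = r -> g != f -> g \in G].
Proof.
move=> G_faces fG; rewrite /bstep in_setU (negPf fG) /=.
rewrite inE => /and3P [/andP [f_ground /eqP card_f] _ /exists_inP [w]].
rewrite in_setD => /andP [w_f w_ground] /forallP faces_G.
have wfG (g : {set T}) : g \subset w |: f -> #|g| = r -> g != f -> g \in G.
  move=> sub card neq; move/implyP: (faces_G g); apply.
  by rewrite setUC sub card eqxx neq.
have card_wf : #|w |: f| = r.+1 by rewrite cardsU1 w_f card_f.
have [s lt_sN sub] : exists2 s, s < N & w |: f \subset clique s.
  apply: clique_closed => //; first by rewrite in_setD w_f w_ground.
  move=> x xf; have : (w |: f) :\ x \in G.
    apply: wfG; first exact: subsetDl.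
      by have := cardsD1 x (w |: f); rewrite card_wf in_setU1 xf orbT; lia.
    apply: (contraNneq _ w_f) => <-; rewrite in_setD1 setU11 andbT.
    by apply: (contraNneq _ w_f) => ->.
  by case/(subsetP G_faces)/facesP => s' lt_sN [sub _]; exists s'.
have eq_wf : w |: f = clique s.
  by apply/eqP; rewrite eqEcard sub card_clique // card_wf ltnSn.
exists s => //; split=> //; first by rewrite -eq_wf subsetUr.
by move=> g; rewrite -eq_wf; apply: wfG.
Qed.

Lemma e_infected P s i o : s < N -> i = s /\ o = s.+1 \/ i = s.+1 /\ o = s ->
  ~~ P o -> e i \in bstep r W (chain_graph P).
Proof.
move=> lt_sN io Po.
have [le_iN le_oN] : i <= N /\ o <= N by lia.
have cl : clique s = e i :|: e o by rewrite /clique; case: io => -[-> ->]; rewrite // setUC.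
rewrite /bstep in_setU; case: (boolP (P i)) => Pi; last by rewrite mem_chain_graph_e ?Pi.
have [w w_cl w_ei] : exists2 w, w \in clique s & w \notin e i.
  apply/subsetPn; apply: contraTN isT => /subset_leq_card.
  by rewrite card_clique // card_e // ltnn.
apply/orP; right; rewrite inE; apply/and3P; split.
- exact/faces_rsubset/e_in_faces.
- by rewrite mem_chain_graph_e // Pi.
apply/exists_inP; exists w; first by rewrite in_setD w_ei (subsetP (clique_subW lt_sN)).
apply/forallP => g; apply/implyP => /and3P [sub /eqP card neq].
have g_cl : g \subset clique s.
  by apply: subset_trans sub _; rewrite subUset sub1set w_cl cl subsetUl.
have [[l le_lN eq_g]|not_e] := e_or_not g; last first.
  by rewrite mem_chain_graph_other //; apply/facesP; exists s.
rewrite eq_g mem_chain_graph_e //; rewrite eq_g eq_e // in neq.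
have [] := e_sub_clique le_lN lt_sN; first by rewrite -eq_g.
  by case: io => -[E1 E2] E3; subst; rewrite // eqxx in neq.
by case: io => -[E1 E2] E3; subst; rewrite // eqxx in neq.
Qed.

Definition missing_next (P : pred nat) : pred nat :=
  fun j => [&& P j, (j == 0) || P j.-1 & (j == N) || P j.+1].

Lemma bstep_chain_graph P :
  bstep r W (chain_graph P) = chain_graph (missing_next P).
Proof.
have G_faces : chain_graph P \subset faces by apply: subsetDl.
apply/setP => f; have [[i le_iN ->]|not_e] := e_or_not f; last first.
  rewrite mem_chain_graph_other //; apply/idP/idP => [|f_face]; last first.
    by rewrite /bstep in_setU mem_chain_graph_other ?f_face.
  have [/(subsetP G_faces)//|fG /(bstep_new_clique G_faces fG)] := boolP (f \in chain_graph P).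
  by case=> s lt_sN [sub card _]; apply/facesP; exists s.
rewrite mem_chain_graph_e //; have [Pi|Pi] := boolP (P i); last first.
  by rewrite /missing_next (negPf Pi) /bstep in_setU mem_chain_graph_e ?Pi.
rewrite /missing_next Pi /= negb_and !negb_or; apply/idP/orP.
  have ei_G : e i \notin chain_graph P by rewrite mem_chain_graph_e ?Pi.
  case/(bstep_new_clique G_faces ei_G) => s lt_sN [sub _ other_G].
  have not_P o : o <= N -> e o \subset clique s -> o != i -> ~~ P o.
    by move=> le_oN sub_o neq; rewrite -mem_chain_graph_e // other_G ?card_e // eq_e.
  have [i_s|i_s] := e_sub_clique le_iN lt_sN sub; subst i.
    by right; rewrite ltn_eqF ?not_P ?subsetUr //; lia.
  by left; rewrite not_P ?subsetUl //; lia.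
case=> /andP [i_neq Pnext].
  by apply: (e_infected (s := i.-1) (o := i.-1)) => //; lia.
by apply: (e_infected (s := i) (o := i.+1)) => //; lia.
Qed.

Lemma bproc_chain_graph (P : nat -> pred nat) :
  (forall i j, j <= N -> missing_next (P i) j = P i.+1 j) ->
  forall i, bproc r W (chain_graph (P 0)) i = chain_graph (P i).
Proof.
move=> next; elim=> [//|i IH]; rewrite /bproc iterS -/(bproc _ _ _ i) IH.
by rewrite bstep_chain_graph; apply: chain_graph_ext; apply: next.
Qed.

Lemma chain_stationary P : (forall j, j <= N -> missing_next P j = P j) ->
  stationary r W (chain_graph P).
Proof. by move=> fix_P; rewrite /stationary bstep_chain_graph; apply: chain_graph_ext. Qed.

Lemma chain_graph_diff P Q i : i <= N -> ~~ Q i ->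
  (forall j, j <= N -> P j = (j == i) || Q j) ->
  chain_graph Q :\: chain_graph P = [set e i].
Proof.
move=> le_iN Qi PQ; rewrite (chain_graph_ext PQ) -chain_graphD1 // setDDr setDv set0U.
by apply/setIidPr; rewrite sub1set mem_chain_graph_e.
Qed.

Theorem chain_sequential : sequential r W (chain_graph (fun j => 0 < j)) e N.
Proof.
have fwd i : bproc r W (chain_graph (fun j => 0 < j)) i = chain_graph (fun j => i < j).
  by apply: (bproc_chain_graph (P := fun i j => i < j)) => i' j _; rewrite /missing_next; lia.
have bwd i : bproc r W (chain_graph (fun j => j < N)) i = chain_graph (fun j => j < N - i).
  have -> : chain_graph (fun j => j < N) = chain_graph (fun j => j < N - 0) by rewrite subn0.
  by apply: (bproc_chain_graph (P := fun i j => j < N - i)) => i' j _; rewrite /missing_next; lia.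
split.
- by move=> i le_iN; apply/faces_rsubset/e_in_faces.
- by rewrite mem_chain_graph_e.
- split=> [i /andP [i_gt0 le_iN]|].
    by rewrite !fwd; apply: chain_graph_diff => // [|j _]; [rewrite ltnn | lia].
  by rewrite fwd; apply: chain_stationary => j le_jN; rewrite /missing_next; lia.
- by rewrite chain_graphD1 //; apply: chain_stationary => j _; rewrite /missing_next /=; lia.
have -> : (chain_graph (fun j => 0 < j) :|: [set e N]) :\ e 0 =
    chain_graph (fun j => j < N).
  by rewrite chain_graphU1 // chain_graphD1 //; apply: chain_graph_ext => j le_jN /=; lia.
move=> i /andP [i_gt0 le_iN]; rewrite !bwd.
by apply: chain_graph_diff; [exact: leq_subr | rewrite ltnn | move=> j _; lia].
Qed.

End CliqueChain.

Section Grid.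
Variables (r k T : nat) (p : nat -> nat -> nat).
Local Notation V := (vtx r k).
Local Notation n := r.-1.

Hypothesis r_ge3 : 3 <= r.
Hypothesis T_gt0 : 0 < T.
Hypothesis p_range : forall i d, i <= T -> 0 < d <= n -> 0 < p i d <= 4 * k - 3.
Hypothesis p_inj : forall i j, i <= T -> j <= T ->
  (forall d, 0 < d <= n -> p i d = p j d) -> i = j.
Hypothesis p_move : forall s, s < T -> exists d, p s d != p s.+1 d.
Hypothesis p_diff : forall s d, s < T -> p s d != p s.+1 d ->
  [/\ 0 < d <= n, p s d = (p s.+1 d).+1 \/ p s.+1 d = (p s d).+1 &
      forall x, x != d -> p s x = p s.+1 x].
Hypothesis p_odd_above : forall s d x, s < T -> p s d != p s.+1 d -> d < x <= n ->
  odd (p s x).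
Hypothesis p_below : forall s s' d x, s < T -> s' < T ->
  p s d != p s.+1 d -> p s' d != p s'.+1 d ->
  minn (p s d) (p s.+1 d) = minn (p s' d) (p s'.+1 d) -> x < d -> p s x = p s' x.
Hypothesis p_adj : forall i j d, i <= T -> j <= T -> 0 < d <= n ->
  (forall x, 0 < x <= n -> x != d -> p i x = p j x) ->
  p i d = (p j d).+1 \/ p j d = (p i d).+1 -> i = j.+1 \/ j = i.+1.

Definition apex : V := vv r k r 1.
Definition vtx_at (d a : nat) : V := (inord d, inord a).
Definition point_set (q : nat -> nat) : {set V} :=
  [set u : V | (0 < u.1 <= n) && (u.2 == q u.1 :> nat)].
Definition path_set i := apex |: point_set (p i).
Definition ground : {set V} := Astar r k (r - 1) :|: [set apex].
Local Notation clique := (clique path_set).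

Lemma apex_coord : (apex.1 : nat) = r.
Proof. by rewrite /= inordK. Qed.

Lemma vtx_at_coord d a : d <= r -> ((vtx_at d a).1 : nat) = d.
Proof. by move=> le_dr; rewrite /= inordK. Qed.

Lemma vtx_at_val d a : a <= 4 * k - 3 -> ((vtx_at d a).2 : nat) = a.
Proof. by move=> le_a; rewrite /= inordK. Qed.

Lemma vtx_eq (u w : V) : (u.1 : nat) = w.1 -> (u.2 : nat) = w.2 -> u = w.
Proof. by case: u w => [a b] [c d] /= /val_inj -> /val_inj ->. Qed.

Lemma p_le i d : i <= T -> 0 < d <= n -> p i d <= 4 * k - 3.
Proof. by move=> le_iT d_range; have := p_range le_iT d_range; lia. Qed.

Lemma in_point_set (u : V) q :
  (u \in point_set q) = (0 < u.1 <= n) && (u.2 == q u.1 :> nat).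
Proof. by rewrite inE. Qed.

Lemma vtx_at_point_set q d : 0 < d <= n -> q d <= 4 * k - 3 -> vtx_at d (q d) \in point_set q.
Proof.
by move=> d_range le_q; rewrite in_point_set vtx_at_coord ?vtx_at_val ?eqxx ?d_range //; lia.
Qed.

Lemma point_set_napex q u : u \in point_set q -> u != apex.
Proof. by rewrite in_point_set; apply: contraTneq => ->; rewrite apex_coord; lia. Qed.

Lemma in_ground u : u \in ground -> u = apex \/ 0 < u.1 <= n /\ 0 < u.2 <= 4 * k - 3.
Proof. by rewrite !inE => /orP [|/eqP]; [right; lia | left]. Qed.

Lemma apex_ground : apex \in ground.
Proof. by rewrite !inE eqxx orbT. Qed.

Lemma point_set_ground i : i <= T -> point_set (p i) \subset ground.
Proof.
move=> le_iT; apply/subsetP => u; rewrite in_point_set !inE => /andP [u_range /eqP u2].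
by have := p_range le_iT u_range; rewrite -u2; lia.
Qed.

Lemma card_coords : #|[set d : 'I_r.+1 | 0 < d <= n]| = n.
Proof.
have -> : [set d : 'I_r.+1 | 0 < d <= n] = [set: 'I_r.+1] :\ ord0 :\ ord_max.
  by apply/setP => d; rewrite !inE -!val_eqE /=; have := ltn_ord d; lia.
have := cardsD1 ord0 [set: 'I_r.+1]; rewrite cardsT card_ord inE.
have r_neq0 : (r != 0) = true by lia.
have := cardsD1 ord_max ([set: 'I_r.+1] :\ ord0); rewrite !inE -val_eqE /= r_neq0 /=.
set A := #|_ :\ ord0|; set B := #|_ :\ ord_max|; lia.
Qed.

Lemma card_le_coords (A : {set V}) : (forall u : V, u \in A -> 0 < u.1 <= n) ->
  {in A &, injective (fun u : V => u.1)} -> #|A| <= n.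
Proof.
move=> A_range inj; rewrite -(card_in_imset inj) -card_coords subset_leq_card //.
by apply/subsetP => d /imsetP [u uA ->]; rewrite inE A_range.
Qed.

Lemma point_set_coord_inj q : {in point_set q &, injective (fun u : V => u.1)}.
Proof.
move=> u w; rewrite !in_point_set => /andP [_ /eqP u2] /andP [_ /eqP w2] eq_u.
by apply: vtx_eq; rewrite ?u2 ?w2 eq_u.
Qed.

Lemma card_point_set q : (forall d, 0 < d <= n -> q d <= 4 * k - 3) -> #|point_set q| = n.
Proof.
move=> q_range; apply/eqP; rewrite eqn_leq.
have -> : #|point_set q| <= n.
  by apply: card_le_coords (@point_set_coord_inj q) => u; rewrite in_point_set => /andP [].
rewrite -{1}card_coords -(card_in_imset (f := fun d : 'I_r.+1 => vtx_at d (q d))).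
  apply: subset_leq_card; apply/subsetP => u /imsetP [d]; rewrite inE => d_range ->.
  exact: vtx_at_point_set (q_range _ _).
move=> d d' /[!inE] d_range d'_range /(congr1 (fun u : V => (u.1 : nat))).
by rewrite !vtx_at_coord //; [apply: val_inj | lia | lia].
Qed.

Lemma in_path_set u i : (u \in path_set i) = (u == apex) || (u \in point_set (p i)).
Proof. by rewrite in_setU1. Qed.

Lemma path_set_ground i : i <= T -> path_set i \subset ground.
Proof. by move=> le_iT; rewrite subUset sub1set apex_ground point_set_ground. Qed.

Lemma card_path_set i : i <= T -> #|path_set i| = r.
Proof.
move=> le_iT; rewrite cardsU1 card_point_set => [|d]; last exact: p_le.
have -> : apex \notin point_set (p i) by apply/negP => /point_set_napex; rewrite eqxx.
by rewrite add1n prednK //; lia.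
Qed.

Lemma apex_clique s : apex \in clique s.
Proof. by rewrite in_setU in_path_set eqxx. Qed.

Lemma in_clique s u : u \in clique s -> u != apex ->
  0 < u.1 <= n /\ ((u.2 : nat) = p s u.1 \/ (u.2 : nat) = p s.+1 u.1).
Proof.
rewrite in_setU !in_path_set !in_point_set => + /negPf u_apex; rewrite u_apex /=.
by case/orP => /andP [u_range /eqP u2]; split=> //; [left | right].
Qed.

Lemma point_set_eq i q : i <= T -> point_set (p i) = point_set q ->
  forall d, 0 < d <= n -> p i d = q d.
Proof.
move=> le_iT eq_pts d d_range; have := vtx_at_point_set d_range (p_le le_iT d_range).
by rewrite eq_pts in_point_set vtx_at_coord ?vtx_at_val ?p_le // => [/andP [_ /eqP]|]; lia.
Qed.

Lemma point_set_split i j d : i <= T -> 0 < d <= n -> (forall x, x != d -> p i x = p j x) ->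
  point_set (p i) \subset vtx_at d (p i d) |: point_set (p j).
Proof.
move=> le_iT d_range same; apply/subsetP => u.
rewrite in_setU1 !in_point_set => /andP [u_range /eqP u2].
have [u_d|u_nd] := eqVneq (u.1 : nat) d; last first.
  by rewrite u_range u2 (same _ u_nd) eqxx orbT.
have -> : u = vtx_at d (p i d).
  by apply: vtx_eq; rewrite ?vtx_at_coord ?vtx_at_val ?u2 ?u_d ?p_le //; lia.
by rewrite eqxx.
Qed.

Lemma path_setU i j d : i <= T -> 0 < d <= n -> (forall x, x != d -> p i x = p j x) ->
  path_set i :|: path_set j = vtx_at d (p i d) |: path_set j.
Proof.
move=> le_iT d_range same; have at_i := vtx_at_point_set d_range (p_le le_iT d_range).
have /subsetP split_i := point_set_split le_iT d_range same.
apply/setP => u; rewrite in_setU1 in_setU !in_path_set.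
have [->|u_neq] := eqVneq u (vtx_at d (p i d)) => /=; first by rewrite at_i !orbT.
have [/split_i|_] := boolP (u \in point_set (p i)); last by rewrite orbF orbA orbb.
by rewrite in_setU1 (negPf u_neq) /= => ->; rewrite !orbT.
Qed.

Lemma clique_split s d : s < T -> p s d != p s.+1 d ->
  clique s = vtx_at d (p s d) |: path_set s.+1 /\
  clique s = vtx_at d (p s.+1 d) |: path_set s.
Proof.
move=> lt_sT move_d; have [d_range _ same] := p_diff lt_sT move_d.
rewrite /clique; split; first exact: path_setU (ltnW lt_sT) d_range same.
by rewrite setUC (path_setU lt_sT d_range (fun x x_d => esym (same x x_d))).
Qed.

Lemma vtx_at_napex d a : 0 < d <= n -> vtx_at d a != apex.
Proof.
move=> d_range; apply/eqP => /(congr1 (fun u : V => (u.1 : nat))).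
by rewrite apex_coord vtx_at_coord; lia.
Qed.

Lemma vtx_at_notin_path_set i d a : 0 < d <= n -> a <= 4 * k - 3 -> a != p i d ->
  vtx_at d a \notin path_set i.
Proof.
move=> d_range le_a neq; have le_dr : d <= r by lia.
rewrite in_path_set in_point_set (negPf (vtx_at_napex a d_range)) vtx_at_coord //.
by rewrite vtx_at_val // (negPf neq) andbF.
Qed.

Lemma card_clique s : s < T -> #|clique s| = r.+1.
Proof.
move=> lt_sT; have [d move_d] := p_move lt_sT; have [d_range _ _] := p_diff lt_sT move_d.
have [-> _] := clique_split lt_sT move_d.
by rewrite cardsU1 vtx_at_notin_path_set ?card_path_set ?p_le 1?eq_sym //; lia.
Qed.

Lemma sub_path_set (g : {set V}) j (a : V) : j <= T -> apex \notin g -> a \notin g ->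
  #|g| = n -> g \subset a |: path_set j -> g = point_set (p j).
Proof.
move=> le_jT apex_g a_g card_g sub; apply/eqP.
rewrite eqEcard card_g card_point_set ?leqnn ?andbT => [|d]; last exact: p_le.
apply/subsetP => u ug; move/subsetP: sub => /(_ u ug).
rewrite in_setU1 in_path_set => /or3P [/eqP ua|/eqP u_apex|//].
  by rewrite -ua ug in a_g.
by rewrite -u_apex ug in apex_g.
Qed.

Lemma point_set_in_clique s (g : {set V}) : s < T -> g \subset clique s -> apex \notin g ->
  #|g| = n -> {in g &, injective (fun u : V => u.1)} ->
  exists2 j, j = s \/ j = s.+1 & g = point_set (p j).
Proof.
move=> lt_sT sub apex_g card_g inj.
have [d move_d] := p_move lt_sT; have [d_range _ _] := p_diff lt_sT move_d.
have [cl1 cl2] := clique_split lt_sT move_d.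
have [a_g|a_g] := boolP (vtx_at d (p s d) \in g); last first.
  by exists s.+1; [right | apply: sub_path_set a_g card_g _; rewrite // -cl1].
have b_g : vtx_at d (p s.+1 d) \notin g.
  apply: (contraNN _ move_d) => b_g; apply/eqP.
  have /(congr1 (fun u : V => (u.2 : nat))) := inj _ _ a_g b_g erefl.
  by rewrite !vtx_at_val ?p_le //; lia.
by exists s; [left | apply: sub_path_set b_g card_g _; rewrite // -?cl2 // ltnW].
Qed.

Lemma path_set_sub_clique i s : i <= T -> s < T -> path_set i \subset clique s ->
  i = s \/ i = s.+1.
Proof.
move=> le_iT lt_sT sub.
have sub_i : point_set (p i) \subset clique s by apply: subset_trans sub; apply: subsetUr.
have apex_i : apex \notin point_set (p i) by apply/negP => /point_set_napex; rewrite eqxx.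
have card_i : #|point_set (p i)| = n by apply: card_point_set => d; apply: p_le.
have [j ij eq_pts] := point_set_in_clique lt_sT sub_i apex_i card_i (@point_set_coord_inj _).
have le_jT : j <= T by lia.
by rewrite (p_inj le_iT le_jT (point_set_eq le_iT eq_pts)).
Qed.

Lemma clique_pair s y z : s < T -> y \in clique s -> z \in clique s ->
  y != apex -> z != apex -> (y.1 : nat) = z.1 -> y != z ->
  [/\ p s y.1 != p s.+1 y.1, minn y.2 z.2 = minn (p s y.1) (p s.+1 y.1) &
      (y.2 : nat) = (z.2).+1 \/ (z.2 : nat) = (y.2).+1].
Proof.
move=> lt_sT ys zs y_apex z_apex eq1 yz.
have [_ y2] := in_clique ys y_apex; have [_ z2] := in_clique zs z_apex; rewrite -eq1 in z2.
have neq2 : (y.2 : nat) != z.2 by apply: contra_neq yz; apply: vtx_eq.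
have move_y : p s y.1 != p s.+1 y.1 by lia.
by have [_ step _] := p_diff lt_sT move_y; split=> //; lia.
Qed.

Lemma clique_other s u d : s < T -> u \in clique s -> u != apex -> p s d != p s.+1 d ->
  (u.1 : nat) != d -> (u.2 : nat) = p s u.1.
Proof.
move=> lt_sT us u_apex move_d ud; have [_ u2] := in_clique us u_apex.
by have [_ _ /(_ _ ud) same] := p_diff lt_sT move_d; lia.
Qed.

(* U is w |: f without the apex, and removing any y \in f from U leaves a subset of a clique.
   Counting coordinates shows that U = f with exactly one pair of twins; removing either twin
   leaves the vertex set of a path point, and these two points are adjacent on the path. *)
Section Closure.
Variables f U : {set V}.
Hypothesis f_sub_U : f \subset U.
Hypothesis apex_U : apex \notin U.
Hypothesis U_ground : U \subset ground.
Hypothesis card_f : #|f| = r.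
Hypothesis cover : forall y, y \in f -> exists2 s, s < T & U :\ y \subset clique s.

Lemma U_napex u : u \in U -> u != apex.
Proof. by apply: contraTneq => ->. Qed.

Lemma U_range u : u \in U -> 0 < u.1 <= n.
Proof.
move=> uU; have [/eqP|[]] := in_ground (subsetP U_ground u uU) => //.
by rewrite (negPf (U_napex uU)).
Qed.

Definition twins (a b : V) := [&& a \in U, b \in U, a != b & (a.1 == b.1 :> nat)].

Lemma pair_in_clique a b : a \in U -> b \in U ->
  exists2 s, s < T & a \in clique s /\ b \in clique s.
Proof.
move=> aU bU; have : 0 < #|f :\ a :\ b|.
  by have := cardsD1 a f; have := cardsD1 b (f :\ a); lia.
rewrite card_gt0 => /set0Pn [y]; rewrite !in_setD1 => /and3P [yb ya yf].
have [s lt_sT /subsetP sub] := cover yf; exists s => //.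
by split; apply: sub; rewrite in_setD1 ?aU ?bU eq_sym ?ya ?yb.
Qed.

Lemma twin_step a b : twins a b -> (a.2 : nat) = (b.2).+1 \/ (b.2 : nat) = (a.2).+1.
Proof.
case/and4P=> aU bU ab /eqP eq1; have [s lt_sT [a_s b_s]] := pair_in_clique aU bU.
by have [_ _] := clique_pair lt_sT a_s b_s (U_napex aU) (U_napex bU) eq1 ab.
Qed.

Lemma no_triple a b c : twins a b -> twins a c -> twins b c -> False.
Proof. by move=> /twin_step ab /twin_step ac /twin_step bc; lia. Qed.

Lemma twins_odd_above a b c x s s' : twins a b -> twins c x -> (a.1 : nat) != c.1 ->
  s < T -> s' < T -> [/\ b \in clique s, c \in clique s & x \in clique s] ->
  [/\ a \in clique s', c \in clique s' & x \in clique s'] ->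
  (c.1 : nat) < a.1 /\ odd a.2 /\ odd b.2.
Proof.
case/and4P=> aU bU ab /eqP eq_ab; case/and4P=> cU xU cx /eqP eq_cx ac lt_sT lt_s'T.
case=> b_s c_s x_s [a_s' c_s' x_s'].
have [move_s min_s _] := clique_pair lt_sT c_s x_s (U_napex cU) (U_napex xU) eq_cx cx.
have [move_s' min_s' _] := clique_pair lt_s'T c_s' x_s' (U_napex cU) (U_napex xU) eq_cx cx.
have b2 : (b.2 : nat) = p s a.1.
  by rewrite eq_ab; apply: (clique_other lt_sT b_s (U_napex bU) move_s); rewrite -eq_ab.
have a2 : (a.2 : nat) = p s' a.1 by apply: (clique_other lt_s'T a_s' (U_napex aU) move_s').
have a_range := U_range aU.
case: (ltngtP (a.1 : nat) c.1) => [lt_ac|lt_ca|/eqP]; last by rewrite (negPf ac).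
  have := p_below lt_sT lt_s'T move_s move_s' _ lt_ac; rewrite -min_s -min_s' => /(_ erefl).
  by rewrite -a2 -b2 => eq2; case/negP: ab; apply/eqP; apply: vtx_eq.
have ca_range : c.1 < a.1 <= n by rewrite lt_ca; case/andP: a_range.
by rewrite a2 b2 (p_odd_above lt_sT move_s) ?(p_odd_above lt_s'T move_s').
Qed.

Lemma twinsC a b : twins a b -> twins b a.
Proof. by case/and4P=> aU bU ab /eqP eq1; rewrite /twins aU bU eq_sym ab eq1 eqxx. Qed.

Lemma coord_neq (u v : V) : (u.1 : nat) != v.1 -> u != v.
Proof. by apply: contra_neq => ->. Qed.

Lemma cover_others y : y \in f ->
  exists2 s, s < T & forall u, u \in U -> u != y -> u \in clique s.
Proof.
case/cover=> s lt_sT /subsetP sub; exists s => // u uU uy.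
by apply: sub; rewrite in_setD1 uy.
Qed.

Lemma no_twins_in_f a b c x : twins a b -> twins c x -> (a.1 : nat) != c.1 ->
  a \in f -> b \in f -> False.
Proof.
move=> tab tcx ac af bf; have [aU bU ab /eqP eq_ab] := and4P tab.
have [cU xU _ /eqP eq_cx] := and4P tcx.
have [s lt_sT in_s] := cover_others af; have [s' lt_s'T in_s'] := cover_others bf.
have ba : b != a by rewrite eq_sym.
have ca : c != a by apply: coord_neq; rewrite eq_sym.
have xa : x != a by apply: coord_neq; rewrite -eq_cx eq_sym.
have cb : c != b by apply: coord_neq; rewrite -eq_ab eq_sym.
have xb : x != b by apply: coord_neq; rewrite -eq_cx -eq_ab eq_sym.
have [_ [odd_a odd_b]] := twins_odd_above tab tcx ac lt_sT lt_s'T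
  (And3 (in_s b bU ba) (in_s c cU ca) (in_s x xU xa))
  (And3 (in_s' a aU ab) (in_s' c cU cb) (in_s' x xU xb)).
by case: (twin_step tab) => E; [move: odd_a | move: odd_b]; rewrite E /= ?odd_a ?odd_b.
Qed.

Lemma exists_notin_set2 (A : {set V}) (a' c' : V) : 2 < #|A| ->
  exists2 y, y \in A & y \notin [set a'; c'].
Proof.
move=> card_A; apply/subsetPn; apply: contraTN isT => /subset_leq_card.
by rewrite cards2; lia.
Qed.

Lemma no_two_twins a b c x : twins a b -> twins c x -> (a.1 : nat) != c.1 -> False.
Proof.
move=> tab tcx ac.
have [/andP [af bf]|not_ab] := boolP ((a \in f) && (b \in f)).
  exact: no_twins_in_f tab tcx ac af bf.
have [/andP [cf xf]|not_cx] := boolP ((c \in f) && (x \in f)).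
  by apply: no_twins_in_f tcx tab _ cf xf; rewrite eq_sym.
have card_f3 : 2 < #|f| by rewrite card_f.
have [y yf] := exists_notin_set2 (if a \in f then a else b) (if c \in f then c else x) card_f3.
rewrite in_set2 negb_or => /andP [ya yc].
have off u v : ~~ ((u \in f) && (v \in f)) -> y != (if u \in f then u else v) ->
    u != y /\ v != y.
  case: (boolP (u \in f)) => uf /= nuv yv; rewrite eq_sym (eq_sym v).
    by split=> //; apply: contraNneq nuv => <-.
  by split=> //; apply: contraNneq uf => <-.
have [ay b_y] := off _ _ not_ab ya; have [cy xy] := off _ _ not_cx yc.
have [aU bU ab /eqP eq_ab] := and4P tab; have [cU xU cx /eqP eq_cx] := and4P tcx.
have [s lt_sT in_s] := cover_others yf.
have [move_a _ _] :=
  clique_pair lt_sT (in_s a aU ay) (in_s b bU b_y) (U_napex aU) (U_napex bU) eq_ab ab.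
have [move_c _ _] :=
  clique_pair lt_sT (in_s c cU cy) (in_s x xU xy) (U_napex cU) (U_napex xU) eq_cx cx.
have [_ _ same] := p_diff lt_sT move_a.
by rewrite same ?eqxx // eq_sym in move_c.
Qed.

Lemma twins_exist : exists a b, twins a b.
Proof.
have [/existsP [a /existsP [b tab]]|none] := boolP [exists a, exists b, twins a b].
  by exists a, b.
have : #|U| <= n.
  apply: card_le_coords U_range _ => u v uU vU eq_uv; apply/eqP; apply: contraNT none => uv.
  by apply/existsP; exists u; apply/existsP; exists v; rewrite /twins uU vU uv eq_uv eqxx.
by have := subset_leq_card f_sub_U; rewrite card_f; lia.
Qed.

Lemma inj_off_twin a b : twins a b -> {in U :\ a &, injective (fun u : V => u.1)}.
Proof.
move=> tab u v /[!in_setD1] /andP [ua uU] /andP [va vU] eq_uv.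
case: (eqVneq u v) => // uv; exfalso.
have tuv : twins u v by rewrite /twins uU vU uv eq_uv eqxx.
have [aU _ _ _] := and4P tab.
have [ua1|ua1] := eqVneq (a.1 : nat) u.1; last exact: no_two_twins tab tuv ua1.
have tau : twins a u by rewrite /twins aU uU eq_sym ua ua1 eqxx.
have tav : twins a v by rewrite /twins aU vU eq_sym va ua1 eq_uv eqxx.
exact: no_triple tau tav tuv.
Qed.

Lemma U_eq_f : U = f.
Proof.
have [a [b tab]] := twins_exist; have [aU _ _ _] := and4P tab.
have Ua_range u : u \in U :\ a -> 0 < u.1 <= n by rewrite in_setD1 => /andP [_ /U_range].
have := card_le_coords Ua_range (inj_off_twin tab); have := cardsD1 a U; rewrite aU.
by move=> card_U card_Ua; apply/esym/eqP; rewrite eqEcard f_sub_U card_f; lia.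
Qed.

Lemma off_twin_point_set a b : twins a b -> exists2 j, j <= T & U :\ b = point_set (p j).
Proof.
move=> tab; have [_ bU _ _] := and4P tab.
have [s lt_sT sub] : exists2 s, s < T & U :\ b \subset clique s by apply: cover; rewrite -U_eq_f.
have card_Ub : #|U :\ b| = n by have := cardsD1 b U; rewrite bU U_eq_f card_f; lia.
have apex_Ub : apex \notin U :\ b by rewrite in_setD1 (negPf apex_U) andbF.
have [j js ->] := point_set_in_clique lt_sT sub apex_Ub card_Ub (inj_off_twin (twinsC tab)).
by exists j => //; lia.
Qed.

Lemma twin_value a b j : twins a b -> j <= T -> U :\ b = point_set (p j) -> p j a.1 = a.2.
Proof.
move=> tab le_jT Ub; have [aU _ ab /eqP eq_ab] := and4P tab; have a_range := U_range aU.
have at_Ub : vtx_at a.1 (p j a.1) \in U :\ b by rewrite Ub vtx_at_point_set ?p_le.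
have a_Ub : a \in U :\ b by rewrite in_setD1 ab aU.
have eq_a : vtx_at a.1 (p j a.1) = a.
  by apply: (inj_off_twin (twinsC tab) at_Ub a_Ub); apply: inord_val.
by rewrite -{2}eq_a vtx_at_val ?p_le.
Qed.

Lemma closure_clique : exists2 s, s < T & U \subset clique s.
Proof.
have [a [b tab]] := twins_exist; have [aU bU ab /eqP eq_ab] := and4P tab.
have [j le_jT Ub] := off_twin_point_set tab.
have [j' le_j'T Ua] := off_twin_point_set (twinsC tab).
have agree x : 0 < x <= n -> x != a.1 -> p j x = p j' x.
  move=> x_range xa; have x_le : x <= r by lia.
  have : vtx_at x (p j x) \in U :\ b by rewrite Ub vtx_at_point_set ?p_le.
  rewrite !in_setD1 => /andP [_ xU].
  have : vtx_at x (p j x) \in U :\ a by rewrite in_setD1 xU coord_neq ?vtx_at_coord.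
  by rewrite Ua in_point_set vtx_at_coord ?vtx_at_val ?p_le // => /andP [_ /eqP].
have step : p j a.1 = (p j' a.1).+1 \/ p j' a.1 = (p j a.1).+1.
  by rewrite (twin_value tab) // eq_ab (twin_value (twinsC tab)) //; apply: twin_step.
have U_sub : U \subset path_set j :|: path_set j'.
  apply/subsetP => u uU; rewrite in_setU !in_path_set -Ub -Ua !in_setD1 uU !andbT.
  by case: (eqVneq u a) => [->|]; rewrite ?ab ?orbT.
have [j_eq|j'_eq] := p_adj le_jT le_j'T (U_range aU) agree step.
  by exists j'; [lia | rewrite /clique -j_eq setUC].
by exists j; [lia | rewrite /clique -j'_eq].
Qed.

End Closure.

Lemma clique_closed (f : {set V}) (w : V) :
  f \subset ground -> #|f| = r -> w \in ground :\: f ->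
  (forall x, x \in f -> exists2 s, s < T & (w |: f) :\ x \subset clique s) ->
  exists2 s, s < T & w |: f \subset clique s.
Proof.
move=> f_ground card_f /[!in_setD] /andP [w_f w_ground] cover.
have via_apex (U : {set V}) s :
    (w |: f) :\ apex \subset U -> U \subset clique s -> w |: f \subset clique s.
  move=> /subsetP sub1 /subsetP sub2; apply/subsetP => u u_wf.
  have [->|u_apex] := eqVneq u apex; first exact: apex_clique.
  by rewrite sub2 // sub1 // in_setD1 u_apex.
have [apex_f|apex_f] := boolP (apex \in f).
  by have [s lt_sT sub] := cover _ apex_f; exists s => //; apply: via_apex sub.
set U := (w |: f) :\ apex.
have f_sub_U : f \subset U.
  apply/subsetP => u uf; rewrite in_setD1 in_setU1 uf orbT andbT.
  by apply: contraNneq apex_f => <-.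
have apex_U : apex \notin U by rewrite in_setD1 eqxx.
have U_ground : U \subset ground.
  by apply/subsetP => u; rewrite in_setD1 in_setU1 => /andP [_ /orP [/eqP ->|/(subsetP f_ground)]].
have cover_U y : y \in f -> exists2 s, s < T & U :\ y \subset clique s.
  move=> yf; have [s lt_sT sub] := cover y yf; exists s => //.
  by apply: subset_trans sub; apply/setSD/subsetDl.
have [s lt_sT sub] := closure_clique f_sub_U apex_U U_ground card_f cover_U.
by exists s => //; apply: via_apex sub.
Qed.

Theorem grid_sequential :
  let H := chain_graph r T path_set (fun j => 0 < j) in
  [/\ forall i, i <= T -> apex \in path_set i, forall f, f \in H -> rsubset r ground f &
      sequential r ground H path_set T].
Proof.
split=> [i _|f|]; first by rewrite in_setU1 eqxx.
  exact: (chain_graph_rsubset (@path_set_ground)).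
exact: chain_sequential T_gt0 path_set_ground card_path_set card_clique
  path_set_sub_clique clique_closed.
Qed.

End Grid.

(* The snake is longer than needed: only its first T1 + 1 points are used. *)
Lemma T1_fits_snake r k : 3 <= r -> 2 <= k ->
  let T1 := (2 * k - 1) ^ (r - 3) * (8 * k ^ 2 - 12 * k + 6) - 2 in
  0 < T1 /\ T1.+2 <= snake_len (2 * k - 1) r.-1.
Proof.
move=> r_ge3 k_ge2 T1.
have : 0 < (2 * k - 1) ^ (r - 3) by rewrite expn_gt0; lia.
have -> : snake_len (2 * k - 1) r.-1 = (2 * k - 1) ^ (r - 3) * ((2 * k - 1) ^ 2).*2.
  by rewrite /snake_len -doubleMr -expnD; congr (_ ^ _).*2; lia.
rewrite /T1; set X := (2 * k - 1) ^ (r - 3) => X_gt0.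
have C_ge14 : 14 <= 8 * k ^ 2 - 12 * k + 6 by nia.
have C_le : 8 * k ^ 2 - 12 * k + 6 <= ((2 * k - 1) ^ 2).*2 by nia.
have := leq_mul (leqnn X) C_le; have := leq_pmull (8 * k ^ 2 - 12 * k + 6) X_gt0.
set C := 8 * k ^ 2 - 12 * k + 6; set D := ((2 * k - 1) ^ 2).*2; lia.
Qed.

Theorem proposition2p3 (r k : nat) :
  3 <= r -> 2 <= k ->
  let T1 := (2 * k - 1) ^ (r - 3) * (8 * k ^ 2 - 12 * k + 6) - 2 in
  let W : {set vtx r k} := Astar r k (r - 1) :|: [set vv r k r 1] in
  exists (e : nat -> {set vtx r k}) (H1 : {set {set vtx r k}}),
    [/\ (forall i, i <= T1 -> vv r k r 1 \in e i),
        (forall f, f \in H1 -> rsubset r W f) &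
        sequential r W H1 e T1].
Proof.
move=> r_ge3 k_ge2 T1 W; have [T1_gt0 T1_le] := T1_fits_snake r_ge3 k_ge2.
set K := 2 * k - 1; have K_gt0 : 0 < K by lia.
have valid i : i <= T1 -> i.+1 < snake_len K r.-1.
  by move=> le_i; apply: leq_trans T1_le; rewrite !ltnS.
do 2 eexists; apply: (grid_sequential (p := snake K r.-1)) => //.
- by move=> i d /valid le_i d_range; have := snake_range K_gt0 le_i d_range; rewrite /K; lia.
- by move=> i j /valid le_i /valid le_j; apply: snake_inj.
- by move=> s /valid /(snake_step K_gt0) [d [_ step _]]; exists d; lia.
- by move=> s d /valid; apply: snake_diff.
- by move=> s d x /valid; apply: snake_odd_above.
- by move=> s s' d x /valid lt_s /valid lt_s'; apply: snake_below.
- by move=> i j d /valid le_i /valid le_j; apply: snake_adj.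
Qed.
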